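(* Let $\mathcal{H}_{1}$, $\mathcal{H}_{2}$ and $\mathcal{G}$ be three pdCGs such that both $\mathcal{H}_{1}$ and $\mathcal{H}_{2}$ are covered by $\mathcal{G}$ in the model inclusion order or, equivalently, such that $\mathcal{P}(\mathcal{H}_{1})$ and $\mathcal{P}(\mathcal{H}_{2})$ are two neighbouring submodels of $\mathcal{P}(\mathcal{G})$. Then $\mathcal{H}_{1}\preceq_{t}\mathcal{H}_{2}$ if and only if, for a given edge $(i,j)\in\mathbb{E}_{\mathcal{G}}$, $\mathcal{H}_{2}=(V, E_{\mathcal{G}}, \mathbb{L}_{\mathcal{G}}, \mathbb{E}_{\mathcal{G}}\setminus \{(i,j)\})$ and $\mathcal{H}_{1}$ is either $(V, E_{\mathcal{G}}\setminus\{(i,j)\}, \mathbb{L}_{\mathcal{G}}, \mathbb{E}_{\mathcal{G}} \setminus \{(i,j)\})$ or $(V, E_{\mathcal{G}}\setminus\{\tau(i,j)\}, \mathbb{L}_{\mathcal{G}}, \mathbb{E}_{\mathcal{G}} \setminus \{(i,j)\})$. Moreover, in the latter case $\mathcal{H}_{1}$ is covered by $\mathcal{H}_{2}$ in the twin order ($\mathcal{H}_{1}\prec_t\mathcal{H}_{2}$ with no $\mathcal F\in\mathcal P$ such that $\mathcal{H}_{1}\prec_t\mathcal F\prec_t\mathcal{H}_{2}$), whereas in all other cases $\mathcal{H}_{1}$ and $\mathcal{H}_{2}$ are $\preceq_{t}$-incomparable.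
   Context: Let $V=\{1,\dots,p\}$ and let $\tau$ be a twin-pairing function on $V$, i.e. $\tau(i)\in V$ with $\tau(\tau(i))=i$ and $\tau(i)\neq i$; it is extended to edges by $\tau(i,j)=(\tau(i),\tau(j))$ (endpoints reordered so the smaller comes first) and to sets elementwise. Fix a partition $(L,R)$ of $V$ with $\tau(L)=R$, numbered so that $L=\{1,\dots,q\}$, $R=\{q+1,\dots,p\}$. Let $F_V=\{(i,j): i,j\in V, i<j\}$, $F_L=\{(i,j)\in F_V: i<\tau(j)\}$, $F_R=\{(i,j)\in F_V: i>\tau(j)\}$. A coloured graph $\mathcal G=(\mathcal V,\mathcal E)$ consists of a partition $\mathcal V$ of $V$ into vertex colour classes and a partition $\mathcal E$ of an edge set $E\subseteq F_V$ into edge colour classes. It is a coloured graph for paired data (pdCG) if every colour class is either atomic (a single element) or twin-pairing (of the form $\{i,\tau(i)\}$ or $\{(i,j),\tau(i,j)\}$ with $(i,j)\neq\tau(i,j)$). The associated RCON model for paired data $\mathcal{P}(\mathcal G)$ is the family of Gaussian distributions whose concentration matrix has zero entries for missing edges and equal entries for vertices or edges in the same colour class; $\mathcal{P}$ denotes the family of all pdCGs on $V$. Every pdCG is equivalently represented by the quadruplet $(V,E,\mathbb L,\mathbb E)$ where $E$ is the union of the edge colour classes, $E_L=E\cap F_L$, $E_R=E\cap F_R$, $\mathbb L=\{i\in L:\{i\}\in\mathcal V\}$ and $\mathbb E=\{(i,j)\in E_L\cap\tau(E_R): \{(i,j)\}\in\mathcal E\}$. The model inclusion order is $\mathcal H\preceq_s\mathcal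 G$ iff $\mathcal P(\mathcal H)\subseteq\mathcal P(\mathcal G)$, which holds iff the edge set of $\mathcal H$ is contained in that of $\mathcal G$ and every vertex (resp. edge) colour class of $\mathcal H$ is a union of vertex (resp. edge) colour classes of $\mathcal G$; $\mathcal H$ is covered by $\mathcal G$ in this order if $\mathcal H\prec_s\mathcal G$ and no $\mathcal F\in\mathcal P$ satisfies $\mathcal H\prec_s\mathcal F\prec_s\mathcal G$. The twin order is $\mathcal H\preceq_t\mathcal G$ iff $E_{\mathcal H}\subseteq E_{\mathcal G}$, $\mathbb L_{\mathcal H}\subseteq\mathbb L_{\mathcal G}$ and $\mathbb E_{\mathcal H}\subseteq\mathbb E_{\mathcal G}$. The graphs covered by $\mathcal G$ in the model inclusion order are exactly: (i) $(V,E_{\mathcal G},\mathbb L_{\mathcal G}\setminus\{i\},\mathbb E_{\mathcal G})$, $i\in\mathbb L_{\mathcal G}$; (ii) $(V,E_{\mathcal G},\mathbb L_{\mathcal G},\mathbb E_{\mathcal G}\setminus\{(i,j)\})$, $(i,j)\in\mathbb E_{\mathcal G}$; (iii) $(V,E_{\mathcal G}\setminus\{(i,j)\},\mathbb L_{\mathcal G},\mathbb E_{\mathcal G}\setminus\{(i,j)\})$, $(i,j)\in\mathbb E_{\mathcal G}$; (iv) $(V,E_{\mathcal G}\setminus\{\tau(i,j)\},\mathbb L_{\mathcal G},\mathbb E_{\mathcal G}\setminus\{(i,j)\})$, $(i,j)\in\mathbb E_{\mathcal G}$; (v) $(V,E_{\mathcal G}\setminus\{(i,j)\},\mathbb L_{\mathcal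 G},\mathbb E_{\mathcal G})$ for $(i,j)\in E_{\mathcal G}$ with $\tau(i,j)\notin E_{\mathcal G}$; (vi) $(V,E_{\mathcal G}\setminus\{(i,\tau(i))\},\mathbb L_{\mathcal G},\mathbb E_{\mathcal G})$ for $(i,\tau(i))\in E_{\mathcal G}$; (vii) $(V,E_{\mathcal G}\setminus\{(i,j),\tau(i,j)\},\mathbb L_{\mathcal G},\mathbb E_{\mathcal G})$ for $(i,j),\tau(i,j)\in E_{\mathcal G}$, $(i,j)\neq\tau(i,j)$, $(i,j),\tau(i,j)\notin\mathbb E_{\mathcal G}$. *)

From mathcomp Require Import all_boot.
Set Implicit Arguments. Unset Strict Implicit. Unset Printing Implicit Defensive.

(* Vertices V = {0,...,p-1} (0-indexed version of {1,...,p});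
   L = {0,...,q-1}, R = {q,...,p-1}.  Edges are pairs (i,j) with i < j. *)

Definition edge (p : nat) := ('I_p * 'I_p)%type.

Definition Lset (p q : nat) : {set 'I_p} := [set i : 'I_p | i < q].
Definition Rset (p q : nat) : {set 'I_p} := [set i : 'I_p | q <= i].

Definition twin_pairing (p : nat) (tau : 'I_p -> 'I_p) : Prop :=
  (forall i, tau (tau i) = i) /\ (forall i, tau i != i).

Definition tauE (p : nat) (tau : 'I_p -> 'I_p) (e : edge p) : edge p :=
  if tau e.1 < tau e.2 then (tau e.1, tau e.2) else (tau e.2, tau e.1).

Definition FV (p : nat) : {set edge p} := [set e : edge p | e.1 < e.2].
Definition FL (p : nat) (tau : 'I_p -> 'I_p) : {set edge p} :=
  [set e in FV p | e.1 < tau e.2].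
Definition FR (p : nat) (tau : 'I_p -> 'I_p) : {set edge p} :=
  [set e in FV p | tau e.2 < e.1].

Record cgraph (p : nat) := CG {
  vcol : {set {set 'I_p}};
  ecol : {set {set edge p}} }.

Definition edges (p : nat) (G : cgraph p) : {set edge p} := cover (ecol G).

Definition is_cgraph (p : nat) (G : cgraph p) : Prop :=
  partition (vcol G) [set: 'I_p] /\ partition (ecol G) (edges G) /\
  edges G \subset FV p.

Definition is_pdCG (p : nat) (tau : 'I_p -> 'I_p) (G : cgraph p) : Prop :=
  is_cgraph G /\
  (forall C, C \in vcol G ->
     (exists i, C = [set i]) \/ (exists i, C = [set i; tau i])) /\
  (forall D, D \in ecol G ->
     (exists e, D = [set e]) \/
     (exists e, e != tauE tau e /\ D = [set e; tauE tau e])).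

(* quadruplet representation (V, E, LL, EE) *)
Definition EL (p : nat) (tau : 'I_p -> 'I_p) (G : cgraph p) := edges G :&: FL tau.
Definition ER (p : nat) (tau : 'I_p -> 'I_p) (G : cgraph p) := edges G :&: FR tau.
Definition LL (p q : nat) (G : cgraph p) : {set 'I_p} :=
  [set i in Lset p q | [set i] \in vcol G].
Definition EE (p : nat) (tau : 'I_p -> 'I_p) (G : cgraph p) : {set edge p} :=
  [set e in EL tau G :&: (tauE tau @: ER tau G) | [set e] \in ecol G].

Definition has_quad (p q : nat) (tau : 'I_p -> 'I_p) (G : cgraph p)
  (E : {set edge p}) (L : {set 'I_p}) (EEs : {set edge p}) : Prop :=
  edges G = E /\ LL q G = L /\ EE tau G = EEs.

Definition union_of (T : finType) (P : {set {set T}}) (C : {set T}) : Prop :=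
  exists S : {set {set T}}, S \subset P /\ C = cover S.

(* model inclusion order H <=_s G (combinatorial characterisation of
   P(H) \subseteq P(G)) *)
Definition sle (p : nat) (H G : cgraph p) : Prop :=
  edges H \subset edges G /\
  (forall C, C \in vcol H -> union_of (vcol G) C) /\
  (forall D, D \in ecol H -> union_of (ecol G) D).
Definition slt (p : nat) (H G : cgraph p) : Prop := sle H G /\ H <> G.

Definition scovered (p : nat) (tau : 'I_p -> 'I_p) (H G : cgraph p) : Prop :=
  is_pdCG tau H /\ is_pdCG tau G /\ slt H G /\
  ~ (exists F, is_pdCG tau F /\ slt H F /\ slt F G).

Definition tle (p q : nat) (tau : 'I_p -> 'I_p) (H G : cgraph p) : Prop :=
  edges H \subset edges G /\ LL q H \subset LL q G /\ EE tau H \subset EE tau G.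
Definition tlt (p q : nat) (tau : 'I_p -> 'I_p) (H G : cgraph p) : Prop :=
  tle q tau H G /\ H <> G.
Definition tcovered (p q : nat) (tau : 'I_p -> 'I_p) (H G : cgraph p) : Prop :=
  is_pdCG tau H /\ is_pdCG tau G /\ tlt q tau H G /\
  ~ (exists F, is_pdCG tau F /\ tlt q tau H F /\ tlt q tau F G).

Definition twin_config (p q : nat) (tau : 'I_p -> 'I_p) (G H1 H2 : cgraph p) : Prop :=
  exists e, e \in EE tau G /\
    has_quad q tau H2 (edges G) (LL q G) (EE tau G :\ e) /\
    (has_quad q tau H1 (edges G :\ e) (LL q G) (EE tau G :\ e) \/
     has_quad q tau H1 (edges G :\ tauE tau e) (LL q G) (EE tau G :\ e)).

From mathcomp Require Import all_boot zify.
From Stdlib Require Import Classical.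
Set Implicit Arguments. Unset Strict Implicit. Unset Printing Implicit Defensive.

(* Between pdCGs the model inclusion order only asks that edges and atomic
   colour classes be inherited, and a pdCG is determined by its quadruplet
   (V, E, LL, EE).  If H1 <=_t H2 for two distinct pdCGs covered by G, then
   H1 is not below H2 in the model order; as LL grows, vertex atoms pass from
   H1 to H2, so some edge e is atomic in H1 but shares a class with its twin
   in H2.  The representative f of {e, tau e} then lies in EE_G and tau e is
   not an edge of H1, so H2 lies below G with f merged with its twin, and H1
   below G with moreover tau e deleted.  Both graphs are strictly below G, so
   covering forces equality: this is the twin configuration.  Conversely, the
   two graphs of that configuration differ by one edge only, hence nothing
   fits strictly between them in the twin order. *)

Section UnionOfBlocks.
Variable T : finType.
Implicit Types (P : {set {set T}}) (A B D : {set T}).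

Lemma partition_block_uniq P D A B x :
  partition P D -> A \in P -> B \in P -> x \in A -> x \in B -> A = B.
Proof.
move=> /partition_trivIset tI hA hB xA xB.
by rewrite -(def_pblock tI hA xA) (def_pblock tI hB xB).
Qed.

Lemma union_of_mem P A : A \in P -> union_of P A.
Proof. by move=> hA; exists [set A]; rewrite sub1set cover1. Qed.

Lemma union_of_setU P A B : A \in P -> B \in P -> union_of P (A :|: B).
Proof.
move=> hA hB; exists [set A; B]; split.
  by apply/subsetP => C /set2P [->|->].
apply/setP => y; rewrite inE; apply/orP/bigcupP.
- by case=> h; [exists A; rewrite ?set21 | exists B; rewrite ?set22].
- by case=> C /set2P [->|->] h; [left|right].
Qed.

Lemma union_of_set1 P x : union_of P [set x] -> [set x] \in P.
Proof.
case=> S [/subsetP sSP eS].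
have /bigcupP [C hC xC] : x \in cover S by rewrite -eS set11.
have CS : C \subset [set x] by rewrite eS; apply: bigcup_sup hC.
suff -> : [set x] = C by apply: sSP.
by apply/eqP; rewrite eqEsubset CS sub1set xC.
Qed.

End UnionOfBlocks.

Section PairedData.
Variables (p q : nat) (tau : 'I_p -> 'I_p).
Hypothesis tau_twin : twin_pairing tau.
Hypothesis tau_LR : tau @: Lset p q = Rset p q.
Local Notation tE := (tauE tau).

Lemma tauK : involutive tau. Proof. by case: tau_twin. Qed.

Lemma tau_side (i : 'I_p) : (i < q) = (q <= tau i).
Proof. by have := mem_imset (Lset p q) i (inv_inj tauK); rewrite tau_LR !inE. Qed.

Lemma tau_neq_nat (i j : 'I_p) : i != j :> nat -> tau i != tau j :> nat.
Proof. by apply: contra_neq => /val_inj/(inv_inj tauK) ->. Qed.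

Lemma tauEK e : e \in FV p -> tE (tE e) = e.
Proof.
case: e => x y; rewrite /tauE !inE /= => xy.
by case: (ltnP (tau x) (tau y)) => h /=; rewrite !tauK ?xy // ltnNge ltnW.
Qed.

Lemma FL_FV e : e \in FL tau -> e \in FV p.
Proof. by rewrite inE => /andP[]. Qed.

Lemma FR_FV e : e \in FR tau -> e \in FV p.
Proof. by rewrite inE => /andP[]. Qed.

Lemma tauE_FL e : e \in FL tau -> tE e \in FR tau.
Proof.
case: e => x y; rewrite /tauE !inE /= => /andP[xy xty].
have := tau_side x; have := tau_side y; have := @tau_neq_nat x y.
case: ifP => /= h1; rewrite ?tauK => h2 sy sx; lia.
Qed.

Lemma tauE_FR e : e \in FR tau -> tE e \in FL tau.
Proof.
case: e => x y; rewrite /tauE !inE /= => /andP[xy txy].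
have := tau_side x; have := tau_side y; have := @tau_neq_nat x y.
case: ifP => /= h1; rewrite ?tauK => h2 sy sx; lia.
Qed.

Lemma FL_notFR e : e \in FL tau -> e \notin FR tau.
Proof. by rewrite !inE => /andP[_ h]; apply/negP => /andP[_]; lia. Qed.

Lemma FR_notFL e : e \in FR tau -> e \notin FL tau.
Proof. by apply: contraL => /FL_notFR. Qed.

Lemma tauE_FL_neq e : e \in FL tau -> tE e != e.
Proof. by move=> eL; apply: contraTneq (tauE_FL eL) => ->; apply: FL_notFR. Qed.

Lemma FV_FL_or_FR e : e \in FV p -> tE e != e -> (e \in FL tau) || (e \in FR tau).
Proof.
case: e => x y; rewrite !inE /= => xy; apply: contraR.
rewrite negb_or => /andP[h1 h2].
have ex : x = tau y by apply: ord_inj; lia.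
by rewrite ex in xy *; rewrite /tauE /= tauK ifN //; lia.
Qed.

Definition twin_rep (e : edge p) : edge p := if e \in FL tau then e else tE e.

Lemma twin_rep_id e : e \in FL tau -> twin_rep e = e.
Proof. by rewrite /twin_rep => ->. Qed.

Lemma twin_rep_tauE e : e \in FV p -> twin_rep (tE e) = twin_rep e.
Proof.
move=> eV; rewrite /twin_rep; have [eL|eNL] := boolP (e \in FL tau).
  by rewrite (negbTE (FR_notFL (tauE_FL eL))) tauEK.
have [efix|eNfix] := eqVneq (tE e) e; first by rewrite efix (negbTE eNL).
by have := FV_FL_or_FR eV eNfix; rewrite (negbTE eNL) => /tauE_FR ->.
Qed.

Lemma twin_rep_cases e : e \in FV p -> e = twin_rep e \/ e = tE (twin_rep e).
Proof.
by move=> eV; rewrite /twin_rep; case: ifP => _; [left | right; rewrite tauEK].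
Qed.

Lemma eq_twin_rep e g : e \in FV p -> g \in FV p ->
  twin_rep g = twin_rep e -> g = e \/ g = tE e.
Proof.
move=> eV gV; rewrite /twin_rep; case: ifP => _; case: ifP => _ h.
- by left.
- by right.
- by right; rewrite -h tauEK.
- by left; rewrite -(tauEK gV) h tauEK.
Qed.

Definition vatomic (H : cgraph p) (i : 'I_p) : bool := [set i] \in vcol H.
Definition eatomic (H : cgraph p) (e : edge p) : bool := [set e] \in ecol H.

Definition twin_atomic (E X : {set edge p}) (e : edge p) : bool :=
  [|| tE e \notin E, tE e == e | twin_rep e \in X].

Definition Lrep (i : 'I_p) : 'I_p := if i < q then i else tau i.

Section PdCG.
Variable H : cgraph p.
Hypothesis pdH : is_pdCG tau H.

Lemma vcol_partition : partition (vcol H) [set: 'I_p].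
Proof. by case: pdH => [[]]. Qed.

Lemma ecol_partition : partition (ecol H) (edges H).
Proof. by case: pdH => [[_ []]]. Qed.

Lemma edges_FV e : e \in edges H -> e \in FV p.
Proof. by case: pdH => [[_ [_ /subsetP sEF]]] _ /sEF. Qed.

Lemma mem_edges_class D e : D \in ecol H -> e \in D -> e \in edges H.
Proof. by move=> hD eD; apply/bigcupP; exists D. Qed.

Lemma vertex_class i : [set i] \in vcol H \/ [set i; tau i] \in vcol H.
Proof.
have /bigcupP [C hC iC] : i \in cover (vcol H).
  by rewrite (cover_partition vcol_partition) inE.
case: pdH => _ [/(_ C hC) [] [j Cj] _]; move: iC; rewrite Cj.
- by move/set1P => ->; left; rewrite -Cj.
- by case/set2P => ->; right; [rewrite -Cj | rewrite tauK setUC -Cj].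
Qed.

Lemma vatomic_pair i : [set i; tau i] \in vcol H -> ~~ vatomic H i.
Proof.
move=> hp; apply/negP => ha.
have e1 := partition_block_uniq vcol_partition ha hp (set11 i) (set21 _ _).
have /set1P : tau i \in [set i] by rewrite e1 set22.
by apply/eqP; case: tau_twin.
Qed.

Lemma vatomic_tau i : vatomic H (tau i) = vatomic H i.
Proof.
suff imp j : vatomic H j -> vatomic H (tau j).
  by apply/idP/idP => /imp //; rewrite tauK.
move=> ha; case: (vertex_class (tau j)) => // hp.
by move: hp; rewrite tauK setUC => /vatomic_pair; rewrite ha.
Qed.

Lemma vatomicE i : vatomic H i = (Lrep i \in LL q H).
Proof.
rewrite /LL /Lrep; case: ifP => iL; rewrite !inE ?iL //.
by rewrite tau_side tauK leqNgt iL -/(vatomic H (tau i)) vatomic_tau.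
Qed.

Lemma edge_class e : e \in edges H ->
  [set e] \in ecol H \/ (tE e != e /\ [set e; tE e] \in ecol H).
Proof.
case/bigcupP => D hD eD.
case: pdH => _ [_ /(_ D hD) [[g Dg]|[g [gfix Dg]]]]; move: eD; rewrite Dg.
  by move/set1P => ->; left; rewrite -Dg.
have gV : g \in FV p by apply: edges_FV (mem_edges_class hD _); rewrite Dg set21.
case/set2P => ->; right; first by rewrite eq_sym -Dg.
by rewrite tauEK // setUC -Dg.
Qed.

Lemma eatomic_pair e : tE e != e -> [set e; tE e] \in ecol H -> ~~ eatomic H e.
Proof.
move=> efix hp; apply/negP => ha.
have e1 := partition_block_uniq ecol_partition ha hp (set11 e) (set21 _ _).
have /set1P : tE e \in [set e] by rewrite e1 set22.
exact/eqP.
Qed.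

Lemma eatomic_tauE e : e \in edges H -> tE e \in edges H ->
  eatomic H e -> eatomic H (tE e).
Proof.
move=> eE teE ha; case: (edge_class teE) => // [[efix hp]].
move: hp efix; rewrite tauEK ?edges_FV // setUC eq_sym => hp efix.
by have := eatomic_pair efix hp; rewrite ha.
Qed.

Lemma mem_EE e : e \in EE tau H ->
  [/\ e \in edges H, e \in FL tau & tE e \in edges H].
Proof.
rewrite /EE /EL /ER in_set in_setI in_setI => /andP[/andP[/andP[eE eL] /imsetP[g]]].
by rewrite in_setI => /andP[gE /FR_FV gV] eg _; rewrite eg tauEK // -eg.
Qed.

Lemma EE_eatomic e : e \in edges H -> e \in FL tau -> tE e \in edges H ->
  (e \in EE tau H) = eatomic H e.
Proof.
move=> eE eL teE; rewrite /EE /EL /ER in_set !in_setI eE eL /=.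
suff -> : e \in tE @: (edges H :&: FR tau) by [].
apply/imsetP; exists (tE e); first by rewrite in_setI teE tauE_FL.
by rewrite tauEK // FL_FV.
Qed.

Lemma eatomicE e : e \in edges H ->
  eatomic H e = twin_atomic (edges H) (EE tau H) e.
Proof.
move=> eE; rewrite /twin_atomic.
have [teE|teNE] /= := boolP (tE e \in edges H); last first.
  case: (edge_class eE) => // [[_ hp]].
  by rewrite (mem_edges_class hp (set22 _ _)) in teNE.
have [efix|efix] /= := eqVneq (tE e) e.
  by case: (edge_class eE) => // [[]]; rewrite efix eqxx.
have eV := edges_FV eE; case/orP: (FV_FL_or_FR eV efix) => [eL|eR].
  by rewrite twin_rep_id // EE_eatomic.
rewrite /twin_rep (negbTE (FR_notFL eR)) EE_eatomic ?tauE_FR ?tauEK //.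
by apply/idP/idP => /eatomic_tauE; rewrite ?tauEK //; apply.
Qed.

End PdCG.

Lemma vcol_sub_atomic H H' : is_pdCG tau H -> is_pdCG tau H' ->
  (forall i, vatomic H i = vatomic H' i) -> vcol H \subset vcol H'.
Proof.
move=> pdH pdH' eqa; apply/subsetP => C hC.
case: (pdH) => _ [/(_ C hC) [] [i Ci] _]; subst C.
  by move: hC; rewrite -/(vatomic H i) eqa.
have := vatomic_pair pdH hC; rewrite eqa.
by case: (vertex_class pdH' i) => // h; rewrite /vatomic h.
Qed.

Lemma ecol_sub_atomic H H' : is_pdCG tau H -> is_pdCG tau H' ->
  edges H = edges H' -> {in edges H, forall e, eatomic H e = eatomic H' e} ->
  ecol H \subset ecol H'.
Proof.
move=> pdH pdH' eE eqa; apply/subsetP => D hD.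
case: (pdH) => _ [_ /(_ D hD) [[e De]|[e [efix De]]]]; subst D.
  by rewrite -/(eatomic H' e) -eqa //; apply: mem_edges_class hD (set11 e).
have eH := mem_edges_class hD (set21 _ _).
have eH' : e \in edges H' by rewrite -eE.
have := eatomic_pair pdH _ hD; rewrite eq_sym eqa // => /(_ efix) eN'.
by case: (edge_class pdH' eH') => [h|[_ //]]; rewrite /eatomic h in eN'.
Qed.

Lemma pdCG_quad_inj H H' : is_pdCG tau H -> is_pdCG tau H' ->
  edges H = edges H' -> LL q H = LL q H' -> EE tau H = EE tau H' -> H = H'.
Proof.
move=> pdH pdH' eE eL eX.
have eV i : vatomic H i = vatomic H' i by rewrite !vatomicE // eL.
have eA : {in edges H, forall e, eatomic H e = eatomic H' e}.
  by move=> e eH; rewrite !eatomicE -?eE // eE eX.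
have vc : vcol H = vcol H'.
  by apply/eqP; rewrite eqEsubset !vcol_sub_atomic.
have ec : ecol H = ecol H'.
  apply/eqP; rewrite eqEsubset !ecol_sub_atomic // -eE => e eH; by rewrite eA.
by case: H H' {pdH pdH' eE eL eX eV eA} vc ec => [v c] [v' c'] /= -> ->.
Qed.

Lemma sle_atomicP H G : is_pdCG tau H -> is_pdCG tau G ->
  sle H G <-> [/\ edges H \subset edges G, forall i, vatomic H i -> vatomic G i &
                  {in edges H, forall e, eatomic H e -> eatomic G e}].
Proof.
move=> pdH pdG; split.
  by case=> [sE [sV sD]]; split => // [i /sV | e _ /sD]; apply: union_of_set1.
case=> [sE sV sD]; split => //; split => [C hC | D hD].
  case: (pdH) => _ [/(_ C hC) [] [i Ci] _]; subst C.
    by apply: union_of_mem; apply: sV.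
  have [hG|hNG] := boolP (vatomic G i).
    by apply: union_of_setU; rewrite // -/(vatomic G (tau i)) vatomic_tau.
  case: (vertex_class pdG i) => h; last exact: union_of_mem.
  by rewrite /vatomic h in hNG.
case: (pdH) => _ [_ /(_ D hD) [[e De]|[e [efix De]]]]; subst D.
  by apply: union_of_mem; apply: sD => //; apply: mem_edges_class hD (set11 e).
have eG := subsetP sE _ (mem_edges_class hD (set21 _ _)).
have teG := subsetP sE _ (mem_edges_class hD (set22 _ _)).
have [hG|hNG] := boolP (eatomic G e).
  by apply: union_of_setU => //; apply: eatomic_tauE.
case: (edge_class pdG eG) => [h|[_ h]]; last exact: union_of_mem.
by rewrite /eatomic h in hNG.
Qed.

Section QuadGraph.
Variables (E X : {set edge p}).
Hypothesis E_FV : E \subset FV p.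
Let E_FV_mem e : e \in E -> e \in FV p := subsetP E_FV e.

Definition quad_atoms : {set edge p} := [set e in E | twin_atomic E X e].

Definition quad_ecol : {set {set edge p}} :=
  [set [set e] | e in quad_atoms] :|: [set [set e; tE e] | e in E :\: quad_atoms].

Lemma quad_atoms_tauE e : e \in quad_atoms -> tE e \in E -> tE e \in quad_atoms.
Proof.
rewrite !inE /twin_atomic => /andP[eE ha] teE.
rewrite teE tauEK ?E_FV_mem // eE twin_rep_tauE ?E_FV_mem //.
by move: ha; rewrite teE eq_sym.
Qed.

Lemma quad_nonatom e : e \in E :\: quad_atoms -> [/\ e \in E, tE e \in E & tE e != e].
Proof.
rewrite !inE /twin_atomic => /andP[+ eE]; rewrite eE /= !negb_or negbK.
by case/and3P.
Qed.

Lemma quad_ecol_class D e : D \in quad_ecol -> e \in D ->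
  D = if e \in quad_atoms then [set e] else [set e; tE e].
Proof.
rewrite inE => /orP[/imsetP[g ga ->] /set1P ->|/imsetP[g gn ->]]; first by rewrite ga.
have [gE tgE gfix] := quad_nonatom gn.
move: gn; rewrite inE => /andP[/negbTE gNa _].
case/set2P => ->; first by rewrite gNa.
have tgNa : tE g \notin quad_atoms.
  by apply: contraFN gNa => /quad_atoms_tauE; rewrite tauEK ?E_FV_mem //; apply.
by rewrite (negbTE tgNa) tauEK ?E_FV_mem // setUC.
Qed.

Lemma cover_quad_ecol : cover quad_ecol = E.
Proof.
apply/setP => e; apply/bigcupP/idP => [[D hD eD]|eE].
  move: hD eD; rewrite inE => /orP[/imsetP[g ga ->] /set1P ->|/imsetP[g gn ->]].
    by move: ga; rewrite inE => /andP[].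
  by have [gE tgE _] := quad_nonatom gn; case/set2P => ->.
exists (if e \in quad_atoms then [set e] else [set e; tE e]); last first.
  by case: ifP; rewrite ?set11 ?set21.
rewrite inE; case: ifP => ea; apply/orP; [left | right]; apply: imset_f => //.
by rewrite inE ea eE.
Qed.

Lemma quad_ecol_partition : partition quad_ecol E.
Proof.
apply/and3P; split; first by rewrite cover_quad_ecol.
  apply/trivIsetP => D1 D2 h1 h2; apply: contraR.
  rewrite -setI_eq0 => /set0Pn[e]; rewrite inE => /andP[e1 e2].
  by rewrite (quad_ecol_class h1 e1) (quad_ecol_class h2 e2) eqxx.
apply/negP; rewrite inE => /orP[/imsetP[e _ e0]|/imsetP[e _ e0]].
  by have := set11 e; rewrite -e0 inE.
by have := set21 e (tE e); rewrite -e0 inE.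
Qed.

Lemma quad_ecol_set1 e : ([set e] \in quad_ecol) = (e \in quad_atoms).
Proof.
apply/idP/idP => [h|ea]; last by rewrite inE imset_f.
apply: contraT => eNa.
have e1 := quad_ecol_class h (set11 e); rewrite (negbTE eNa) in e1.
have eE : e \in E.
  by rewrite -cover_quad_ecol; apply/bigcupP; exists [set e]; rewrite ?set11.
have eN : e \in E :\: quad_atoms by rewrite inE eNa eE.
have [_ _ /negP[]] := quad_nonatom eN.
by apply/eqP/set1P; rewrite e1 set22.
Qed.

End QuadGraph.

(* The pdCG with quadruplet (V, E, LL_G, X). *)
Definition quad_graph (G : cgraph p) (E X : {set edge p}) : cgraph p :=
  CG (vcol G) (quad_ecol E X).

Section QuadGraphFacts.
Variables (G : cgraph p) (E X : {set edge p}).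
Hypotheses (pdG : is_pdCG tau G) (E_FV : E \subset FV p).

Lemma edges_quad_graph : edges (quad_graph G E X) = E.
Proof. exact: cover_quad_ecol. Qed.

Lemma quad_graph_pdCG : is_pdCG tau (quad_graph G E X).
Proof.
case: pdG => [[vP _] [vC _]]; split; first split => //.
  by rewrite edges_quad_graph; split; first exact: quad_ecol_partition.
split => // D; rewrite inE => /orP[/imsetP[e _ ->]|/imsetP[e eN ->]].
  by left; exists e.
by right; exists e; have [_ _] := quad_nonatom eN; rewrite eq_sym.
Qed.

Lemma eatomic_quad_graph e : e \in E ->
  eatomic (quad_graph G E X) e = twin_atomic E X e.
Proof. by move=> eE; rewrite /eatomic /= quad_ecol_set1 // inE eE. Qed.

Lemma EE_quad_graph : X \subset E :&: FL tau -> {in X, forall e, tE e \in E} ->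
  EE tau (quad_graph G E X) = X.
Proof.
move=> /subsetP sXE XtE; have pdK := quad_graph_pdCG.
apply/setP => e.
have [/and3P[eE eL teE]|] := boolP [&& e \in E, e \in FL tau & tE e \in E].
  rewrite EE_eatomic ?edges_quad_graph // eatomic_quad_graph // /twin_atomic.
  by rewrite teE (negbTE (tauE_FL_neq eL)) twin_rep_id.
move=> c; apply/idP/idP => h; apply: contraNT c => _.
  by have [] := mem_EE h; rewrite edges_quad_graph => -> -> ->.
by have /[!inE] /andP[-> ->] := sXE e h; rewrite XtE.
Qed.

End QuadGraphFacts.

Lemma twin_atomic_subset (E X Y : {set edge p}) e :
  X \subset Y -> twin_atomic E X e -> twin_atomic E Y e.
Proof. by rewrite /twin_atomic => /subsetP sXY /or3P[->|->|/sXY ->]; rewrite ?orbT. Qed.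

(* For [twin_rep e \in EE_G] these are the graphs (ii) and, according as
   e is or is not [twin_rep e], (iv) or (iii) of the list of graphs covered
   by G. *)
Definition merge_twins (G : cgraph p) (e : edge p) : cgraph p :=
  quad_graph G (edges G) (EE tau G :\ twin_rep e).
Definition drop_twin (G : cgraph p) (e : edge p) : cgraph p :=
  quad_graph G (edges G :\ tE e) (EE tau G :\ twin_rep e).

Section TwinNeighbours.
Variables (G : cgraph p) (e : edge p).
Hypotheses (pdG : is_pdCG tau G) (eG : e \in edges G) (repG : twin_rep e \in EE tau G).

Let eV : e \in FV p := edges_FV pdG eG.
Let EG_FV : edges G \subset FV p := introT subsetP (edges_FV pdG).
Let EGD_FV : edges G :\ tE e \subset FV p := subset_trans (subD1set _ _) EG_FV.

Lemma tauE_mem_edges : tE e \in edges G.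
Proof.
have [fG fL tfG] := mem_EE repG.
by case: (twin_rep_cases eV) => ->; rewrite ?tauEK ?FL_FV.
Qed.

Lemma EE_drop_twin_sub : EE tau G :\ twin_rep e \subset (edges G :\ tE e) :&: FL tau.
Proof.
apply/subsetP => g; rewrite in_setD1 => /andP[gNf /mem_EE[gG gL _]].
rewrite in_setI in_setD1 gG gL !andbT.
by apply: contra_neq gNf => gte; rewrite -(twin_rep_id gL) gte twin_rep_tauE.
Qed.

Lemma EE_drop_twin_tauE :
  {in EE tau G :\ twin_rep e, forall g, tE g \in edges G :\ tE e}.
Proof.
move=> g; rewrite !in_setD1 => /andP[gNf /mem_EE[_ gL ->]]; rewrite andbT.
apply: contra_neq gNf => /(congr1 tE); rewrite (tauEK (FL_FV gL)) (tauEK eV) => ge.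
by rewrite -(twin_rep_id gL) ge.
Qed.

Lemma pdCG_merge_twins : is_pdCG tau (merge_twins G e).
Proof. exact: quad_graph_pdCG. Qed.

Lemma pdCG_drop_twin : is_pdCG tau (drop_twin G e).
Proof. exact: quad_graph_pdCG. Qed.

Lemma EE_merge_twins : EE tau (merge_twins G e) = EE tau G :\ twin_rep e.
Proof.
apply: EE_quad_graph => // [|g /EE_drop_twin_tauE]; last by rewrite in_setD1 => /andP[].
by apply: subset_trans EE_drop_twin_sub _; apply/setSI/subD1set.
Qed.

Lemma EE_drop_twin : EE tau (drop_twin G e) = EE tau G :\ twin_rep e.
Proof. exact/EE_quad_graph/EE_drop_twin_tauE/EE_drop_twin_sub. Qed.

Lemma slt_merge_twins : slt (merge_twins G e) G.
Proof.
split; last first.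
  move=> mG; have /setP/(_ (twin_rep e)) := EE_merge_twins.
  by rewrite mG in_setD1 eqxx repG.
apply/(sle_atomicP pdCG_merge_twins pdG); rewrite /merge_twins edges_quad_graph //.
split => // g gG; rewrite eatomic_quad_graph // (eatomicE pdG gG).
exact/twin_atomic_subset/subD1set.
Qed.

Lemma slt_drop_twin : slt (drop_twin G e) G.
Proof.
split; last first.
  move=> dG; have := tauE_mem_edges; rewrite -{1}dG /drop_twin.
  by rewrite edges_quad_graph // in_setD1 eqxx.
apply/(sle_atomicP pdCG_drop_twin pdG); rewrite /drop_twin edges_quad_graph //.
split => //; first exact: subD1set.
move=> g gD; have gG : g \in edges G by move: gD; rewrite in_setD1 => /andP[].
rewrite eatomic_quad_graph // (eatomicE pdG gG) /twin_atomic in_setD1 negb_and negbK.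
case/or3P => [/orP[/eqP gte|->]|->|/(subsetP (subD1set _ _)) ->]; rewrite ?orbT //.
have ge : g = e by rewrite -(tauEK (edges_FV pdG gG)) gte tauEK.
by rewrite ge repG !orbT.
Qed.

Lemma sle_merge_twins H : is_pdCG tau H -> sle H G ->
  e \in edges H -> tE e \in edges H -> ~~ eatomic H e -> sle H (merge_twins G e).
Proof.
move=> pdH sHG eH teH eNa; have [sE sV sA] := (sle_atomicP pdH pdG).1 sHG.
apply/(sle_atomicP pdH pdCG_merge_twins); rewrite /merge_twins edges_quad_graph //.
split => // g gH ga; have gG := subsetP sE _ gH.
rewrite eatomic_quad_graph //; move: (sA g gH ga).
rewrite (eatomicE pdG gG) /twin_atomic in_setD1 => /or3P[->|->|grep]; rewrite ?orbT //.
have [grf|] := eqVneq (twin_rep g) (twin_rep e); last by rewrite grep /= !orbT.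
case: (eq_twin_rep eV (edges_FV pdG gG) grf) => ge; subst g; first by rewrite ga in eNa.
have := eatomic_tauE pdH teH _ ga; rewrite tauEK // => /(_ eH).
by rewrite (negbTE eNa).
Qed.

Lemma sle_drop_twin H : is_pdCG tau H -> sle H G -> tE e \notin edges H ->
  sle H (drop_twin G e).
Proof.
move=> pdH sHG teNH; have [sE sV sA] := (sle_atomicP pdH pdG).1 sHG.
have sED : edges H \subset edges G :\ tE e.
  apply/subsetP => g gH; rewrite in_setD1 (subsetP sE _ gH) andbT.
  by apply: contraNneq teNH => <-.
apply/(sle_atomicP pdH pdCG_drop_twin); rewrite /drop_twin edges_quad_graph //.
split => // g gH ga; have gG := subsetP sE _ gH.
rewrite eatomic_quad_graph ?(subsetP sED) //; move: (sA g gH ga).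
rewrite (eatomicE pdG gG) /twin_atomic !in_setD1.
case/or3P => [tgN|->|grep]; rewrite ?(negbTE tgN) ?andbF ?orbT //.
have [grf|] := eqVneq (twin_rep g) (twin_rep e); last by rewrite grep /= !orbT.
case: (eq_twin_rep eV (edges_FV pdG gG) grf) => ge; subst g; first by rewrite eqxx.
by rewrite gH in teNH.
Qed.

Lemma twin_config_drop_merge : twin_config q tau G (drop_twin G e) (merge_twins G e).
Proof.
exists (twin_rep e); split => //; split.
  by rewrite /has_quad EE_merge_twins /merge_twins edges_quad_graph.
rewrite /has_quad EE_drop_twin /drop_twin edges_quad_graph //.
set f := twin_rep e; have := twin_rep_cases eV; rewrite -/f => -[ef|etf].
  by right; rewrite -ef.
by left; rewrite etf tauEK // FL_FV //; case: (mem_EE repG).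
Qed.

End TwinNeighbours.

Lemma scovered_eq H F G : scovered tau H G -> is_pdCG tau F ->
  sle H F -> slt F G -> H = F.
Proof.
case=> _ [_ [_ noF]] pdF sHF ltFG; apply: NNPP => nHF.
by apply: noF; exists F.
Qed.

Lemma scovered_not_sle H1 H2 G : scovered tau H1 G -> scovered tau H2 G ->
  H1 <> H2 -> ~ sle H1 H2.
Proof. by move=> [_ [_ [_ noF]]] [pd2 [_ [lt2 _]]] ne s12; apply: noF; exists H2. Qed.

Lemma twin_le_witness H1 H2 : is_pdCG tau H1 -> is_pdCG tau H2 ->
  tle q tau H1 H2 -> ~ sle H1 H2 ->
  exists e, [/\ e \in edges H1, eatomic H1 e, ~~ eatomic H2 e,
                tE e \in edges H2 & tE e \notin edges H1].
Proof.
move=> pd1 pd2 [sE [sL sX]] nsle.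
have [e /and3P[eH1 a1 na2]|none] :=
  pickP [pred e | [&& e \in edges H1, eatomic H1 e & ~~ eatomic H2 e]]; last first.
  have sV i : vatomic H1 i -> vatomic H2 i.
    by rewrite (vatomicE pd1) (vatomicE pd2); apply: (subsetP sL).
  case: nsle; apply/(sle_atomicP pd1 pd2); split => // e eH1 a1.
  by apply/negPn/negP => na2; have := none e; rewrite /= eH1 a1 na2.
have eH2 := subsetP sE _ eH1.
move: (na2); rewrite (eatomicE pd2 eH2) /twin_atomic !negb_or negbK.
case/and3P => teH2 efix rep2; exists e; split => //.
move: a1; rewrite (eatomicE pd1 eH1) /twin_atomic (negbTE efix) /= => /orP[// | rep1].
by rewrite (subsetP sX _ rep1) in rep2.
Qed.

Lemma twin_le_config G H1 H2 : scovered tau H1 G -> scovered tau H2 G -> H1 <> H2 ->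
  tle q tau H1 H2 -> twin_config q tau G H1 H2.
Proof.
move=> cov1 cov2 ne le12.
have [pd1 [pdG [[s1G _] _]]] := cov1; have [pd2 [_ [[s2G _] _]]] := cov2.
have [e [eH1 a1 na2 teH2 teNH1]] :=
  twin_le_witness pd1 pd2 le12 (scovered_not_sle cov1 cov2 ne).
have eH2 := subsetP le12.1 _ eH1.
have [sE1 _ sA1] := (sle_atomicP pd1 pdG).1 s1G.
have [sE2 _ _] := (sle_atomicP pd2 pdG).1 s2G.
have eG := subsetP sE1 _ eH1.
have repG : twin_rep e \in EE tau G.
  have efix : tE e != e by apply: contraNneq teNH1 => ->.
  move: (sA1 e eH1 a1); rewrite (eatomicE pdG eG) /twin_atomic.
  by rewrite (subsetP sE2 _ teH2) (negbTE efix).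
have -> : H2 = merge_twins G e.
  apply: (scovered_eq cov2);
    [exact: pdCG_merge_twins | exact: sle_merge_twins | exact: slt_merge_twins].
have -> : H1 = drop_twin G e.
  apply: (scovered_eq cov1);
    [exact: pdCG_drop_twin | exact: sle_drop_twin | exact: slt_drop_twin].
exact: twin_config_drop_merge.
Qed.

Lemma twin_config_tle G H1 H2 : twin_config q tau G H1 H2 -> tle q tau H1 H2.
Proof.
case=> f [_ [[E2 [L2 X2]] [[E1 [L1 X1]]|[E1 [L1 X1]]]]];
  by rewrite /tle E1 E2 L1 L2 X1 X2 subxx !subD1set.
Qed.

Lemma tcovered_setD1 H1 H2 x : is_pdCG tau H1 -> is_pdCG tau H2 -> H1 <> H2 ->
  edges H1 = edges H2 :\ x -> LL q H1 = LL q H2 -> EE tau H1 = EE tau H2 ->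
  tcovered q tau H1 H2.
Proof.
move=> pd1 pd2 ne E12 L12 X12; split => //; split => //.
split; first by split => //; rewrite /tle E12 L12 X12 subD1set !subxx.
case=> F [pdF [[[sE1 [sL1 sX1]] n1] [[sE2 [sL2 sX2]] n2]]].
have LF : LL q F = LL q H2 by apply/eqP; rewrite eqEsubset sL2 -L12 sL1.
have XF : EE tau F = EE tau H2 by apply/eqP; rewrite eqEsubset sX2 -X12 sX1.
have [xF|xNF] := boolP (x \in edges F).
  apply: n2; apply: pdCG_quad_inj => //; apply/eqP; rewrite eqEsubset sE2 /=.
  apply/subsetP => y yH2; have [->//|yx] := eqVneq y x.
  by apply: (subsetP sE1); rewrite E12 in_setD1 yx.
apply: n1; apply: pdCG_quad_inj; rewrite ?LF ?XF //; apply/eqP.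
rewrite eqEsubset sE1 E12 /=; apply/subsetP => y yF.
by rewrite in_setD1 (subsetP sE2 _ yF) andbT; apply: contraNneq xNF => <-.
Qed.

Lemma twin_config_tcovered G H1 H2 : is_pdCG tau H1 -> is_pdCG tau H2 ->
  H1 <> H2 -> twin_config q tau G H1 H2 -> tcovered q tau H1 H2.
Proof.
move=> pd1 pd2 ne [f [_ [[E2 [L2 X2]] cfg1]]].
have [x [E1 [L1 X1]]] :
    exists x, has_quad q tau H1 (edges G :\ x) (LL q G) (EE tau G :\ f).
  by case: cfg1 => h; eexists; exact: h.
by apply: (tcovered_setD1 (x := x)); rewrite // ?E1 ?E2 ?L1 ?L2 ?X1 ?X2.
Qed.

End PairedData.

Theorem corollary9 (p q : nat) (tau : 'I_p -> 'I_p)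
  (Htau : twin_pairing tau) (HLR : tau @: Lset p q = Rset p q)
  (G H1 H2 : cgraph p)
  (H1cov : scovered tau H1 G) (H2cov : scovered tau H2 G)
  (Hneq : H1 <> H2) :
  (tle q tau H1 H2 <-> twin_config q tau G H1 H2) /\
  (twin_config q tau G H1 H2 -> tcovered q tau H1 H2) /\
  (~ twin_config q tau G H1 H2 -> ~ twin_config q tau G H2 H1 ->
     ~ tle q tau H1 H2 /\ ~ tle q tau H2 H1).
Proof.
have [pd1 _] := H1cov; have [pd2 _] := H2cov.
have Hneq' : H2 <> H1 by move/esym.
split; [split | split].
- exact: (twin_le_config Htau HLR H1cov H2cov Hneq).
- exact: twin_config_tle.
- exact: twin_config_tcovered.
- move=> n12 n21; split.
    by move/(twin_le_config Htau HLR H1cov H2cov Hneq).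
  by move/(twin_le_config Htau HLR H2cov H1cov Hneq').
Qed.
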